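(* Let $F:\mathbb{R}^d\to\mathbb{R}^d$ be smooth and consider $\dot{x}=F(x)$. For a time step $h_n>0$, the scheme $$x_{n+1}=x_n+\big(e^{h_nF'(x_n)}-1\big)\big(F'(x_n)\big)^{-1}F(x_n),$$ which is the scheme $x_{n+1}=x_n+\delta(\bar x,h_n)F(x_n)$ with $\delta(\bar x,h)=\big(e^{hF'(\bar x)}-1\big)\big(F'(\bar x)\big)^{-1}$ and $\bar x=x_n$, is locally exact: for every $n$ it is locally exact at $\bar x=x_n$.
   Context: $F'(x)$ denotes the Jacobian matrix of $F$. Throughout, $F'(\bar x)$ is assumed invertible at the points $\bar x$ considered, and $1$ denotes the identity matrix. The linearization of $\dot{x}=F(x)$ around $\bar x$ is $\dot\xi=F'(\bar x)\xi+F(\bar x)$ with $\xi=x-\bar x$. Its exact discretization with step $h_n$ is $$\xi_{n+1}=e^{h_nF'(\bar x)}\xi_n+\big(e^{h_nF'(\bar x)}-1\big)F'(\bar x)^{-1}F(\bar x).$$ Consider a scheme $x_{n+1}-x_n=\delta(\bar x,h_n)\,\Psi(x_n,x_{n+1})$ in which the matrix $\delta$ depends only on $\bar x$ and $h_n$. Its linearization at $\bar x$ is obtained as follows: - substitute $x_n=\bar x+\xi_n$ and $x_{n+1}=\bar x+\xi_{n+1}$; - keep $\delta(\bar x,h_n)$ fixed; - retain only terms up to first order in $\xi_n,\xi_{n+1}$. The scheme is locally exact at $\bar x$ if this linear relation coincides with the exact discretization above. It is locally exact if there is a sequence $\bar x_n$ with $\bar x_n-x_n=O(h_n)$ such that,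 for every $n$, the scheme is locally exact at $\bar x_n$. *)

From HB Require Import structures.
From mathcomp Require Import all_boot all_order all_algebra.
From mathcomp Require Import all_classical all_reals all_analysis.
Set Implicit Arguments. Unset Strict Implicit. Unset Printing Implicit Defensive.
Import Order.TTheory GRing.Theory Num.Theory.
Import numFieldNormedType.Exports.
Local Open Scope ring_scope.

Fixpoint iter_dir {R : realType} {d : nat} (vs : seq 'cV[R]_d)
    (f : 'cV[R]_d -> 'cV[R]_d) : 'cV[R]_d -> 'cV[R]_d :=
  match vs with
  | [::] => f
  | v :: vs' => 'D_v (iter_dir vs' f)
  end.

Definition smooth {R : realType} {d : nat} (f : 'cV[R]_d -> 'cV[R]_d) : Prop :=
  forall vs : seq 'cV[R]_d,
    continuous (iter_dir vs f) /\
    forall (v x : 'cV[R]_d), derivable (iter_dir vs f) x v.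

Definition jac {R : realType} {d : nat} (f : 'cV[R]_d -> 'cV[R]_d)
    (x : 'cV[R]_d) : 'M[R]_d :=
  \matrix_(i < d, j < d) ('D_(delta_mx j 0 : 'cV[R]_d) f x) i 0.

Definition expm {R : realType} {d : nat} (A : 'M[R]_d) : 'M[R]_d :=
  limn (series (fun k : nat => (k`!%:R)^-1 *: A ^+ k)).

(* The exact discretization of the linearization of x' = F(x) at xbar with
   step h, as a relation between xi_n and xi_{n+1}. *)
Definition exact_discretization {R : realType} {d : nat}
    (F : 'cV[R]_d -> 'cV[R]_d) (xbar : 'cV[R]_d) (h : R)
    (xi xi' : 'cV[R]_d) : Prop :=
  xi' = expm (h *: jac F xbar) *m xi
        + (expm (h *: jac F xbar) - 1%:M) *m invmx (jac F xbar)
          *m F xbar.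

(* Linearization at xbar of the scheme x_{n+1} - x_n = delta(xbar,h) Psi(x_n,x_{n+1}):
   substitute x_n = xbar + xi, x_{n+1} = xbar + xi', keep delta fixed and
   keep first-order terms of Psi. *)
Definition linearized_scheme {R : realType} {d : nat}
    (Psi : 'cV[R]_d -> 'cV[R]_d -> 'cV[R]_d)
    (delta : 'cV[R]_d -> R -> 'M[R]_d) (xbar : 'cV[R]_d) (h : R)
    (xi xi' : 'cV[R]_d) : Prop :=
  xi' - xi = delta xbar h *m
    (Psi xbar xbar + jac (fun y => Psi y xbar) xbar *m xi
                   + jac (fun y => Psi xbar y) xbar *m xi').

Definition locally_exact_at {R : realType} {d : nat}
    (F : 'cV[R]_d -> 'cV[R]_d) (Psi : 'cV[R]_d -> 'cV[R]_d -> 'cV[R]_d)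
    (delta : 'cV[R]_d -> R -> 'M[R]_d) (xbar : 'cV[R]_d) (h : R) : Prop :=
  forall xi xi' : 'cV[R]_d,
    linearized_scheme Psi delta xbar h xi xi' <->
    exact_discretization F xbar h xi xi'.

Definition locally_exact {R : realType} {d : nat}
    (F : 'cV[R]_d -> 'cV[R]_d) (Psi : 'cV[R]_d -> 'cV[R]_d -> 'cV[R]_d)
    (delta : 'cV[R]_d -> R -> 'M[R]_d) (x : nat -> 'cV[R]_d) (h : nat -> R) : Prop :=
  exists xbar : nat -> 'cV[R]_d,
    (exists C : R, forall n, `|xbar n - x n| <= C * h n) /\
    forall n, locally_exact_at F Psi delta (xbar n) (h n).

From HB Require Import structures.
From mathcomp Require Import all_boot all_order all_algebra.
From mathcomp Require Import all_classical all_reals all_analysis.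
Import Order.TTheory GRing.Theory Num.Theory.
Import numFieldNormedType.Exports.
Local Open Scope ring_scope.

(* The linearization of x_{n+1} - x_n = delta F(x_n) at xbar is
   xi' - xi = delta (F xbar + J xi) with J = F'(xbar).  For
   delta = (e^{hJ} - 1) J^-1 the factor J^-1 J cancels, and the relation
   rearranges to xi' = e^{hJ} xi + (e^{hJ} - 1) J^-1 F xbar, which is the
   exact discretization.  Taking xbar_n = x_n gives local exactness with
   xbar_n - x_n = 0. *)

Lemma jac_cst (R : realType) (d : nat) (c x : 'cV[R]_d) :
  jac (fun _ => c) x = 0.
Proof.
by apply/matrixP => i j; rewrite /jac !mxE derive_cst mxE.
Qed.

Lemma increment_affineE (R : realType) (d : nat) (M : 'M[R]_d)
    (a b g : 'cV[R]_d) :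
  (b - a = g + (M - 1%:M) *m a) <-> (b = M *m a + g).
Proof.
rewrite mulmxBl mul1mx; split=> [|->]; last by rewrite addrAC addrC.
by move/eqP; rewrite subr_eq => /eqP ->; rewrite -addrA subrK addrC.
Qed.

Lemma expm_scheme_locally_exact_at (R : realType) (d : nat)
    (F : 'cV[R]_d -> 'cV[R]_d) (xbar : 'cV[R]_d) (h : R) :
  jac F xbar \in unitmx ->
  locally_exact_at F (fun y _ => F y)
    (fun z t => (expm (t *: jac F z) - 1%:M) *m invmx (jac F z)) xbar h.
Proof.
move=> unitJ xi xi'; rewrite /linearized_scheme /exact_discretization.
rewrite jac_cst mul0mx addr0 mulmxDr mulmxA -[_ *m invmx _ *m jac F xbar]mulmxA.
by rewrite mulVmx // mulmx1; apply: increment_affineE.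
Qed.

Lemma locally_exact_along (R : realType) (d : nat)
    (F : 'cV[R]_d -> 'cV[R]_d) (Psi : 'cV[R]_d -> 'cV[R]_d -> 'cV[R]_d)
    (delta : 'cV[R]_d -> R -> 'M[R]_d) (x : nat -> 'cV[R]_d) (h : nat -> R) :
  (forall n, locally_exact_at F Psi delta (x n) (h n)) ->
  locally_exact F Psi delta x h.
Proof.
move=> exact_x; exists x; split=> //.
by exists 0 => n; rewrite subrr normr0 mul0r.
Qed.

Theorem corollary4p1 (R : realType) (d : nat)
    (F : 'cV[R]_d -> 'cV[R]_d) (h : nat -> R) (x : nat -> 'cV[R]_d) :
  smooth F ->
  (forall n, 0 < h n) ->
  (forall n, jac F (x n) \in unitmx) ->
  (forall n, x n.+1 = x n + (expm (h n *: jac F (x n)) - 1%:M)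
                            *m invmx (jac F (x n)) *m F (x n)) ->
  let delta := fun (xbar : 'cV[R]_d) (t : R) =>
      (expm (t *: jac F xbar) - 1%:M) *m invmx (jac F xbar) in
  let Psi := fun (y _ : 'cV[R]_d) => F y in
  (forall n, locally_exact_at F Psi delta (x n) (h n)) /\
  locally_exact F Psi delta x h.
Proof.
move=> _ _ unitJ _ delta Psi.
have exact_x n : locally_exact_at F Psi delta (x n) (h n).
  exact: expm_scheme_locally_exact_at.
by split=> //; apply: locally_exact_along.
Qed.
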